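(* For every nice graph $G$ with maximum degree $\Delta=\Delta(G)$, $\chi'_{qm\Sigma}(G)\le \left\lceil \frac{3\Delta+4}{2}\right\rceil$.
   Context: All graphs are simple and finite. A $k$-edge-coloring of $G$ is any map $c:E(G)\to\{1,\dots,k\}$ (adjacent edges may share colors). It induces $\sigma_c(v)=\sum_{u\in N(v)}c(vu)$. The coloring is neighbor sum distinguishing (NSD) if $\sigma_c(u)\ne\sigma_c(v)$ for every edge $uv$. It is quasi-majority if every vertex $v$ is incident to at most $\lceil d(v)/2\rceil$ edges of each single color. $\chi'_{qm\Sigma}(G)$ denotes the least $k$ such that $G$ has a $k$-edge-coloring that is both quasi-majority and NSD. A graph is nice if it has no connected component isomorphic to $K_2$. *)

From mathcomp Require Import all_boot.
Set Implicit Arguments. Unset Strict Implicit. Unset Printing Implicit Defensive.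

Definition simple_graph (T : finType) (e : rel T) : Prop :=
  symmetric e /\ irreflexive e.

Definition deg (T : finType) (e : rel T) (v : T) : nat := #|[set u | e v u]|.

Definition max_deg (T : finType) (e : rel T) : nat := \max_(v : T) deg e v.

(* nice: no connected component isomorphic to K2; in a simple graph a
   connected component is K2 iff it has exactly two vertices. *)
Definition nice (T : finType) (e : rel T) : Prop :=
  forall x : T, #|[set y | connect e x y]| != 2.

(* An edge colouring is a function c on ordered pairs, symmetric on edges;
   only its values on edges matter.  It is a k-edge-colouring if every edge
   gets a colour in {1,...,k}. *)
Definition edge_coloring (T : finType) (e : rel T) (k : nat) (c : T -> T -> nat) : Prop :=
  forall u v, e u v -> c u v = c v u /\ 1 <= c u v <= k.

Definition sigma (T : finType) (e : rel T) (c : T -> T -> nat) (v : T) : nat :=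
  \sum_(u | e v u) c v u.

Definition nsd (T : finType) (e : rel T) (c : T -> T -> nat) : Prop :=
  forall u v, e u v -> sigma e c u <> sigma e c v.

Definition ceil_div (a b : nat) : nat := (a + b - 1) %/ b.

Definition quasi_majority (T : finType) (e : rel T) (c : T -> T -> nat) : Prop :=
  forall (v : T) (j : nat), #|[set u | e v u && (c v u == j)]| <= ceil_div (deg e v) 2.

Definition qm_nsd_colorable (T : finType) (e : rel T) (k : nat) : Prop :=
  exists c : T -> T -> nat, [/\ edge_coloring e k c, quasi_majority e c & nsd e c].

From mathcomp Require Import all_boot zify.
Set Implicit Arguments. Unset Strict Implicit. Unset Printing Implicit Defensive.

(* The colouring is built one vertex v at a time, keeping it quasi-majority and
   NSD on every edge that is not a K2 component.  The edges from v to its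
   neighbourhood N are coloured greedily except for the last two, p and q: each
   greedy edge vu must avoid at most d + 2 colours, d being the degree of u
   before v is added (one colour that would break quasi-majority at u, one
   colour class already full at v, and one colour per neighbour of u whose sum
   it would hit).  The colours x, y of vp, vq are chosen jointly, since they
   must also make the sum at v differ from the sums in N: among the pairs
   (min X, y) and (x, max Y) all sums x + y are distinct, so each forbidden sum
   excludes at most one pair and each forbidden relation x + a = y + b at most
   two.  With k = ceil((3 Delta + 4) / 2) colours this leaves a valid pair.
   Niceness finally excludes edges between two vertices of degree one. *)

Lemma count_mem_le_size (A : eqType) (s F : seq A) : uniq s -> count (mem F) s <= size F.
Proof.
move=> s_uniq; rewrite -size_filter; apply: uniq_leq_size; first exact: filter_uniq.
by move=> x; rewrite mem_filter => /andP[].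
Qed.

Lemma count_le1 (A : eqType) (P : pred A) (s : seq A) z :
  uniq s -> (forall x, P x -> x = z) -> count P s <= 1.
Proof.
move=> s_uniq Pz; apply: leq_trans (sub_count (a2 := pred1 z) _ s) _.
  by move=> x /Pz ->; rewrite /= eqxx.
by rewrite count_uniq_mem // leq_b1.
Qed.

Lemma count_has_le (A B : Type) (q : B -> pred A) (D : seq B) (s : seq A) m :
  (forall b, count (q b) s <= m) -> count (fun p => has (q^~ p) D) s <= m * size D.
Proof.
move=> hq; elim: D => [|b D IH] /=; first by rewrite count_pred0.
have := count_predUI (q b) (fun p => has (q^~ p) D) s; have := hq b.
have -> : count (predU (q b) (fun p => has (q^~ p) D)) s = count (fun p => q b p || has (q^~ p) D) s by [].
lia.
Qed.

Definition free_colors (k : nat) (F : seq nat) : seq nat := [seq x <- iota 1 k | x \notin F].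

Lemma free_colors_uniq (k : nat) (F : seq nat) : uniq (free_colors k F).
Proof. exact/filter_uniq/iota_uniq. Qed.

Lemma mem_free_colors (k : nat) (F : seq nat) x : (x \in free_colors k F) = [&& 0 < x <= k & x \notin F].
Proof. by rewrite mem_filter mem_iota andbC; case: x => // x; rewrite add1n ltnS. Qed.

Lemma size_free_colors (k : nat) (F : seq nat) : k - size F <= size (free_colors k F).
Proof.
have E := count_predC (mem F) (iota 1 k); rewrite size_iota in E.
by rewrite size_filter leq_subLR -{1}E leq_add2r count_mem_le_size ?iota_uniq.
Qed.

Lemma exists_free_color (k : nat) (F : seq nat) : size F < k -> exists2 x, 0 < x <= k & x \notin F.
Proof.
move=> ltFk; have := size_free_colors k F.
case E: (free_colors k F) => [|x s] /=; first lia.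
move=> _; have := mem_head x s; rewrite -E mem_free_colors => /andP[].
by exists x.
Qed.

Lemma large_class_unique (A : finType) (P : {set A}) (g : A -> nat) m :
  #|P| < 2 * m -> exists a, forall j, j != a -> #|[set w in P | g w == j]| < m.
Proof.
move=> ltP; case: (pickP (fun w => (w \in P) && (m <= #|[set z in P | g z == g w]|)))
  => [w /andP[Pw large_w] | none].
  exists (g w) => j ne_j; rewrite ltnNge; apply/negP => large_j.
  have disj : [disjoint [set z in P | g z == g w] & [set z in P | g z == j]].
    apply/pred0P => z /=; rewrite !inE; apply/negP => /andP[/andP[_ /eqP->] /andP[_ /eqP ej]].
    by rewrite ej eqxx in ne_j.
  have : [set z in P | g z == g w] :|: [set z in P | g z == j] \subset P.
    by apply/subsetP => z; rewrite !inE => /orP[/andP[->]|/andP[->]].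
  move/subset_leq_card; rewrite cardsU (disjoint_setI0 disj) cards0; lia.
exists 0 => j _; rewrite ltnNge; apply/negP => large_j.
have /card_gt0P[z] : 0 < #|[set w in P | g w == j]| by apply: leq_trans large_j; lia.
by rewrite inE => /andP[Pz /eqP gz]; have := none z; rewrite /= Pz gz large_j.
Qed.

Lemma map_subn_notin (A : eqType) (g : A -> nat) (s : seq A) a x w :
  x \notin [seq g y - a | y <- s] -> w \in s -> a + x <> g w.
Proof. by move=> /negP xs ws axg; apply: xs; apply/mapP; exists w; rewrite // -axg addKn. Qed.

Lemma seq_has_min (X : seq nat) : 0 < size X ->
  exists2 x0, x0 \in X & forall x, x \in X -> x0 <= x.
Proof.
case: X => // x X _; have exX : exists x1, x1 \in x :: X by exists x; rewrite mem_head.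
by case: (ex_minnP exX) => x0; exists x0.
Qed.

Lemma seq_has_max (X : seq nat) : 0 < size X ->
  exists2 x0, x0 \in X & forall x, x \in X -> x <= x0.
Proof.
case: X => // x X _; have exX : exists x1, x1 \in x :: X by exists x; rewrite mem_head.
have ubX : forall x1, x1 \in x :: X -> x1 <= \max_(y <- x :: X) y.
  by move=> x1 x1X; apply: leq_bigmax_seq.
by case: (ex_maxnP exX ubX) => x0; exists x0.
Qed.

(* The pairs (min X, y) and (x, max Y): within either half an equation x + a = y + b
   fixes the free coordinate. *)
Lemma staircase (X Y : seq nat) : uniq X -> uniq Y -> 0 < size X -> 0 < size Y ->
  exists st : seq (nat * nat), [/\ size X + size Y = (size st).+1,
    {in st, forall p, p.1 \in X /\ p.2 \in Y},
    uniq [seq p.1 + p.2 | p <- st] &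
    forall a b, count (fun p => p.1 + a == p.2 + b) st <= 2].
Proof.
move=> X_uniq Y_uniq /seq_has_min[x0 x0X x0_min] /seq_has_max[y0 y0Y y0_max].
set X' := [seq x <- X | x != x0].
have X'_uniq : uniq X' by exact: filter_uniq.
have mem_X' x : x \in X' -> x \in X /\ x0 < x.
  by rewrite mem_filter ltn_neqAle eq_sym => /andP[-> xX]; rewrite x0_min.
exists ([seq (x0, y) | y <- Y] ++ [seq (x, y0) | x <- X']); split.
- rewrite size_cat !size_map size_filter.
  have := count_predC (pred1 x0) X; rewrite count_uniq_mem // x0X add1n.
  have -> : count (predC (pred1 x0)) X = count (fun x => x != x0) X by [].
  by move=> <-; rewrite addSn addnC.
- move=> p; rewrite mem_cat => /orP[] /mapP[z zZ ->] //=.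
  by have [] := mem_X' z zZ.
- rewrite map_cat cat_uniq -!map_comp; apply/and3P; split.
  + by rewrite map_inj_uniq // => y y' /= /addnI.
  + apply/hasPn => _ /mapP[x xX' ->] /=; apply/mapP => -[y yY] /=.
    have := y0_max y yY; have := (mem_X' x xX').2; lia.
  + by rewrite map_inj_uniq // => x x' /= /addIn.
- move=> a b; rewrite count_cat !count_map; rewrite -[2]/(1 + 1); apply: leq_add.
  + by apply: (count_le1 (z := x0 + a - b)) => // y /= /eqP; lia.
  + by apply: (count_le1 (z := y0 + b - a)) => // x /= /eqP; lia.
Qed.

Lemma exists_pair_avoiding (X Y S : seq nat) (D : seq (nat * nat)) :
  uniq X -> uniq Y -> 0 < size X -> 0 < size Y ->
  size S + 2 * size D + 2 <= size X + size Y ->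
  exists x y : nat, [/\ x \in X, y \in Y, x + y \notin S & all (fun d => x + d.1 != y + d.2) D].
Proof.
move=> X_uniq Y_uniq X_gt0 Y_gt0 hsize.
have [st [size_st st_XY sums_uniq count_eq]] := staircase X_uniq Y_uniq X_gt0 Y_gt0.
pose bad_sum (p : nat * nat) := p.1 + p.2 \in S.
pose bad_diff (p : nat * nat) := has (fun d => p.1 + d.1 == p.2 + d.2) D.
have le_bad_sum : count bad_sum st <= size S.
  by have := count_mem_le_size S sums_uniq; rewrite count_map.
have le_bad_diff : count bad_diff st <= 2 * size D.
  by apply: (count_has_le (q := fun d p => p.1 + d.1 == p.2 + d.2)) => -[a b]; exact: count_eq.
have /hasP[[x y] pst /norP[Sxy Dxy]] : has (predC (predU bad_sum bad_diff)) st.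
  rewrite has_count; have := count_predC (predU bad_sum bad_diff) st.
  have := count_predUI bad_sum bad_diff st; lia.
have [xX yY] := st_XY _ pst.
by exists x, y; split => //; rewrite all_predC.
Qed.

Lemma exists_color_pair (k : nat) (Fx Fy S : seq nat) (D : seq (nat * nat)) :
  size Fx < k -> size Fy < k -> size S + 2 * size D + 2 + size Fx + size Fy <= 2 * k ->
  exists x y : nat, [/\ x \in free_colors k Fx, y \in free_colors k Fy, x + y \notin S &
    all (fun d => x + d.1 != y + d.2) D].
Proof.
move=> ltFx ltFy hsize.
have := size_free_colors k Fx; have := size_free_colors k Fy => szY szX.
apply: exists_pair_avoiding; rewrite ?free_colors_uniq //; lia.
Qed.

(* An edge with both ends of degree at most one is a K2 component. *)
Definition weak_nsd (T : finType) (e : rel T) (c : T -> T -> nat) : Prop :=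
  forall u w, e u w -> (1 < deg e u) || (1 < deg e w) -> sigma e c u <> sigma e c w.

Definition weak_qm_nsd (T : finType) (e : rel T) (k : nat) (c : T -> T -> nat) : Prop :=
  [/\ edge_coloring e k c, quasi_majority e c & weak_nsd e c].

Lemma weak_qm_nsd_eq2 (T : finType) (e1 e2 : rel T) k c :
  e1 =2 e2 -> weak_qm_nsd e1 k c -> weak_qm_nsd e2 k c.
Proof.
move=> e12 [col qm weak].
have deg_eq u : deg e1 u = deg e2 u by apply: eq_card => w; rewrite !inE e12.
have sigma_eq u : sigma e1 c u = sigma e2 c u by apply: eq_bigl => w; rewrite e12.
split=> [u w | u j | u w]; rewrite -?e12.
- exact: col.
- by rewrite -deg_eq (eq_card (B := [set w | e1 u w && (c u w == j)])) // => w; rewrite !inE e12.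
- by rewrite -!deg_eq -!sigma_eq; exact: weak.
Qed.

Section InducedSubgraphs.
Variables (T : finType) (e : rel T).
Hypotheses (e_sym : symmetric e) (e_irr : irreflexive e).

Definition induced (S : {set T}) : rel T := fun x y => [&& x \in S, y \in S & e x y].

Lemma induced_sym S : symmetric (induced S).
Proof. by move=> x y; rewrite /induced e_sym andbCA. Qed.

Lemma induced_irr S : irreflexive (induced S).
Proof. by move=> x; rewrite /induced e_irr !andbF. Qed.

Lemma induced_setT : induced setT =2 e.
Proof. by move=> x y; rewrite /induced !inE. Qed.

Lemma deg_induced_le S u : deg (induced S) u <= max_deg e.
Proof.
apply: leq_trans (leq_bigmax (F := deg e) u).
by apply/subset_leq_card/subsetP => w; rewrite !inE => /and3P[].
Qed.

Lemma weak_qm_nsd_induced0 k c : weak_qm_nsd (induced set0) k c.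
Proof.
split=> [u w | u j | u w]; rewrite /induced ?inE //.
by rewrite (_ : [set _ | _] = set0) ?cards0 //; apply/setP => z; rewrite !inE.
Qed.

Section AddVertex.
Variables (k : nat) (S : {set T}) (v : T) (c : T -> T -> nat).
Hypothesis c_weak : weak_qm_nsd (induced (S :\ v)) k c.
Hypothesis k_large : 3 * max_deg e + 4 <= 2 * k.

Local Notation G := (induced S).
Local Notation G' := (induced (S :\ v)).

Definition N := [set w | G v w].
Definition old_sigma u := sigma G' c u.
Definition old_deg u := deg G' u.
Definition old_mult u j := #|[set w | G' u w && (c u w == j)]|.

Definition join_coloring (f : T -> nat) : T -> T -> nat :=
  fun a b => if a == v then f b else if b == v then f a else c a b.

Definition partial_sigma (P : {set T}) (f : T -> nat) w :=
  old_sigma w + (if w \in P then f w else 0).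

(* f colours the edges vu for u in P; the final sum at a neighbour in N :\ P is not
   known yet, so it is not compared. *)
Definition admissible (b : nat) (P : {set T}) (f : T -> nat) : Prop := [/\
  forall u, u \in P -> 0 < f u <= k,
  forall u, u \in P -> old_mult u (f u) < ceil_div (old_deg u).+1 2,
  forall j, #|[set u in P | f u == j]| <= b &
  forall u w, u \in P -> G' u w -> (w \in N) ==> (w \in P) ->
    partial_sigma P f u <> partial_sigma P f w].

Definition admissible_star (f : T -> nat) : Prop :=
  admissible (ceil_div #|N| 2) N f /\
  forall u, u \in N -> (1 < #|N|) || (0 < old_deg u) -> \sum_(w in N) f w <> old_sigma u + f u.

Lemma induced_del u w : G' u w = [&& u != v, w != v & G u w].
Proof. by rewrite /induced !inE; case: (u == v); case: (w == v); rewrite ?andbF. Qed.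

Lemma N_neq w : w \in N -> w != v.
Proof. by rewrite inE; apply: contraTneq => ->; rewrite induced_irr. Qed.

Lemma deg_join u : u != v -> deg G u = (u \in N) + old_deg u.
Proof.
move=> uv; rewrite /deg (cardsD1 v) !inE induced_sym; congr (_ + _).
by apply: eq_card => w; rewrite !inE induced_del uv.
Qed.

Lemma sigma_join f u : u != v -> sigma G (join_coloring f) u = partial_sigma N f u.
Proof.
move=> uv; rewrite /sigma (bigID (pred1 v)) /= addnC; congr (_ + _).
  apply: eq_big => [w|w /andP[_ wv]]; first by rewrite induced_del uv andbC.
  by rewrite /join_coloring (negbTE uv) (negbTE wv).
have Guv : G u v = (u \in N) by rewrite inE induced_sym.
case: ifP => uN.
  rewrite (big_pred1 v) /join_coloring ?(negbTE uv) ?eqxx // => w /=.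
  by case: eqP => [->|]; rewrite ?Guv ?uN ?andbF.
by rewrite big_pred0 // => w; case: eqP => [->|]; rewrite ?Guv ?uN ?andbF.
Qed.

Lemma sigma_join_v f : sigma G (join_coloring f) v = \sum_(w in N) f w.
Proof. by apply: eq_big => [w|w _]; rewrite ?inE // /join_coloring eqxx. Qed.

Lemma mult_join f u j : u != v ->
  #|[set w | G u w && (join_coloring f u w == j)]| = ((u \in N) && (f u == j)) + old_mult u j.
Proof.
move=> uv; rewrite (cardsD1 v) !inE induced_sym /join_coloring eqxx (negbTE uv).
congr (_ + _); apply: eq_card => w; rewrite !inE induced_del uv /=.
by case: (w =P v) => //= _; rewrite andbT.
Qed.

Lemma mult_join_v f j :
  #|[set w | G v w && (join_coloring f v w == j)]| = #|[set w in N | f w == j]|.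
Proof. by apply: eq_card => w; rewrite !inE /join_coloring eqxx. Qed.

Lemma join_edge_coloring b f : admissible b N f -> edge_coloring G k (join_coloring f).
Proof.
case=> f_range _ _ _ a a'.
have join_vN w : w \in N -> join_coloring f v w = f w /\ join_coloring f w v = f w.
  by move=> wN; rewrite /join_coloring eqxx (negbTE (N_neq wN)).
case: (a =P v) => [->|/eqP av] Gab.
  have bN : a' \in N by rewrite inE.
  by have [-> ->] := join_vN a' bN; split; last exact: f_range.
case: (a' =P v) Gab => [->|/eqP bv] Gab.
  have aN : a \in N by rewrite inE induced_sym.
  by have [-> ->] := join_vN a aN; split; last exact: f_range.
have G'ab : G' a a' by rewrite induced_del av bv.
by case: c_weak => col _ _; rewrite /join_coloring (negbTE av) (negbTE bv); exact: col.
Qed.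

Lemma join_quasi_majority f : admissible_star f -> quasi_majority G (join_coloring f).
Proof.
case=> -[_ f_unsat f_class _] _ u j.
case: (u =P v) => [->|/eqP uv]; first by rewrite mult_join_v; exact: f_class.
rewrite mult_join // deg_join //; case: c_weak => _ qm _.
have := qm u j; rewrite -/(old_mult u j) -/(old_deg u) /ceil_div.
case: (boolP (u \in N)) => [uN|_] /= le_mult; last lia.
case: (f u =P j) => [<-|_] /=; last lia.
by have := f_unsat u uN; rewrite /ceil_div; lia.
Qed.

Lemma join_weak_nsd f : admissible_star f -> weak_nsd G (join_coloring f).
Proof.
case=> -[_ _ _ f_sigma] f_sum.
have at_v w : w \in N -> (1 < deg G v) || (1 < deg G w) ->
    sigma G (join_coloring f) v <> sigma G (join_coloring f) w.
  move=> wN; have wv := N_neq wN.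
  rewrite (deg_join wv) wN add1n ltnS sigma_join_v (sigma_join _ wv).
  by rewrite /partial_sigma wN; exact: f_sum.
move=> a b.
case: (a =P v) => [->|/eqP av]; first by move=> Gvb; apply: at_v; rewrite inE.
case: (b =P v) => [->|/eqP bv] Gab.
  have aN : a \in N by rewrite inE induced_sym.
  by rewrite orbC => /(at_v a aN) /nesym.
have G'ab : G' a b by rewrite induced_del av bv.
rewrite !sigma_join // !deg_join // => deg_ab.
case: (boolP (a \in N)) => aN; first by apply: f_sigma => //; exact: implybb.
case: (boolP (b \in N)) => bN.
  by apply/nesym/f_sigma; rewrite ?implybb // induced_sym.
case: c_weak => _ _ weak; rewrite /partial_sigma (negbTE aN) (negbTE bN) !addn0.
by apply: weak => //; move: deg_ab; rewrite (negbTE aN) (negbTE bN).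
Qed.

Lemma join_weak_qm_nsd f : admissible_star f -> weak_qm_nsd G k (join_coloring f).
Proof.
move=> f_star; split; last exact: join_weak_nsd.
- by case: f_star => f_adm _; exact: join_edge_coloring f_adm.
- exact: join_quasi_majority.
Qed.

Lemma old_deg_lt u : u \in N -> old_deg u < max_deg e.
Proof. by move=> uN; have := deg_induced_le S u; rewrite deg_join ?N_neq // uN. Qed.

Lemma card_N_le : #|N| <= max_deg e.
Proof. exact: deg_induced_le. Qed.

Lemma old_sigma_gt0 u : 0 < old_deg u -> 0 < old_sigma u.
Proof.
case: c_weak => col _ _; case/card_gt0P => w; rewrite inE => uw.
rewrite /old_sigma /sigma (bigD1 w) //=; have [_ /andP[c_gt0 _]] := col u w uw.
exact: leq_trans c_gt0 (leq_addr _ _).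
Qed.

Lemma unsaturated_colors u :
  exists a, forall j, j != a -> old_mult u j < ceil_div (old_deg u).+1 2.
Proof.
have [|a a_only] := @large_class_unique _ [set w | G' u w] (c u) (ceil_div (old_deg u).+1 2).
  by rewrite -/(deg G' u) -/(old_deg u) /ceil_div; lia.
exists a => j /a_only; rewrite /old_mult (eq_card (B := [set w in [set w | G' u w] | c u w == j])) //.
by move=> w; rewrite !inE.
Qed.

Lemma admissible0 b f : admissible b set0 f.
Proof.
split=> [u|u|j|u w]; rewrite ?inE //.
by rewrite (_ : [set _ in _ | _] = set0) ?cards0 //; apply/setP => z; rewrite !inE.
Qed.

Lemma partial_sigma_add (P : {set T}) (f : T -> nat) u x z :
  partial_sigma (u |: P) (fun y => if y == u then x else f y) z =
  if z == u then old_sigma u + x else partial_sigma P f z.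
Proof. by rewrite /partial_sigma in_setU1; case: (z =P u) => [->|]. Qed.

Lemma card_class_add (P : {set T}) (f : T -> nat) u (x j : nat) : u \notin P ->
  #|[set z in u |: P | (if z == u then x else f z) == j]| = (x == j) + #|[set z in P | f z == j]|.
Proof.
move=> uP; rewrite (cardsD1 u) !inE eqxx /=; congr (_ + _); apply: eq_card => z.
by rewrite !inE; case: (z =P u) => [->|]; rewrite ?(negbTE uP) ?andbF.
Qed.

Lemma admissible_add b b' (P : {set T}) (f : T -> nat) u x :
  admissible b P f -> u \notin P -> b <= b' ->
  0 < x <= k -> old_mult u x < ceil_div (old_deg u).+1 2 ->
  #|[set w in P | f w == x]| < b' ->
  (forall w, G' u w -> (w \in N) ==> (w \in P) -> old_sigma u + x <> partial_sigma P f w) ->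
  admissible b' (u |: P) (fun z => if z == u then x else f z).
Proof.
case=> f_range f_unsat f_class f_sigma uP le_bb' x_range x_unsat x_class x_sigma.
split=> [z | z | j | z w].
- by rewrite in_setU1; case: (z =P u) => [_ _ | _ /= /f_range].
- by rewrite in_setU1; case: (z =P u) => [-> _ | _ /= /f_unsat].
- rewrite card_class_add //; case: (x =P j) => [<- | _] //=.
  exact: leq_trans (f_class j) le_bb'.
- rewrite !partial_sigma_add !in_setU1.
  case: (z =P u) => [-> _ Guw | zu /= zP G'zw].
    have wu : (w == u) = false by apply/negbTE; apply: contraTneq Guw => ->; rewrite induced_irr.
    by rewrite wu /=; exact: x_sigma.
  case: (w =P u) G'zw => [-> G'zu _ | _ G'zw /= wNP]; last exact: f_sigma.
  by apply/nesym/x_sigma; rewrite 1?induced_sym // zP implybT.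
Qed.

Lemma greedy_admissible (P : {set T}) : P \subset N -> #|P| + 2 <= #|N| ->
  exists f, admissible (ceil_div #|N| 2 - 1) P f.
Proof.
elim: {P}#|P| {-2}P (erefl #|P|) => [|n IH] P cardP PN ltPN.
  by exists (fun=> 1); rewrite (cards0_eq cardP); exact: admissible0.
have [u uP] : exists u, u \in P by apply/card_gt0P; rewrite cardP.
have cardP' : #|P :\ u| = n by move: cardP; rewrite (cardsD1 u) uP => -[].
have [||f f_adm] := IH (P :\ u) cardP'; first exact: subset_trans (subsetDl _ _) PN.
  by move: ltPN; rewrite cardP cardP'; lia.
have uN : u \in N by exact: (subsetP PN).
have [a a_only] := unsaturated_colors u.
have [|b b_only] := large_class_unique (P := P :\ u) f (m := ceil_div #|N| 2 - 1).
  by move: ltPN; rewrite cardP cardP' /ceil_div; lia.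
pose F := [:: a, b & [seq partial_sigma (P :\ u) f w - old_sigma u | w <- enum [set w | G' u w]]].
have [|x x_range] := @exists_free_color k F.
  by rewrite /= size_map -cardE; have := old_deg_lt uN; rewrite /old_deg /deg; lia.
rewrite !inE !negb_or => /and3P[xa xb xF].
exists (fun z => if z == u then x else f z); rewrite -(setD1K uP).
apply: admissible_add f_adm _ _ x_range (a_only x xa) (b_only x xb) _ => //.
- by rewrite !inE eqxx.
- by move=> w uw _; apply: map_subn_notin xF _; rewrite mem_enum inE.
Qed.

Lemma admissible_star0 : #|N| = 0 -> exists f, admissible_star f.
Proof.
move/cards0_eq => N0; exists (fun=> 1); split; first by rewrite N0; exact: admissible0.
by move=> u; rewrite N0 inE.
Qed.

Lemma admissible_star1 : #|N| = 1 -> exists f, admissible_star f.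
Proof.
move/eqP/cards1P => -[p N1]; have pN : p \in N by rewrite N1 set11.
have [a a_only] := unsaturated_colors p.
pose F := a :: [seq old_sigma w - old_sigma p | w <- enum [set w | G' p w]].
have [|x x_range] := @exists_free_color k F.
  by rewrite /= size_map -cardE; have := old_deg_lt pN; rewrite /old_deg /deg; lia.
rewrite inE negb_or => /andP[xa xF].
have p0 : p \notin set0 by rewrite inE.
have adm : admissible 1 [set p] (fun z => if z == p then x else 1).
  have adm0 := admissible0 0 (fun=> 1); have [_ _ class0 _] := adm0.
  rewrite -[[set p]]setU0; apply: admissible_add adm0 p0 _ x_range (a_only x xa) _ _ => //.
    exact: class0.
  move=> w pw _; rewrite /partial_sigma inE addn0.
  by apply: map_subn_notin xF _; rewrite mem_enum inE.
exists (fun z => if z == p then x else 1); split; first by rewrite N1 cards1.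
move=> u; rewrite N1 cards1 inE => /eqP-> /= deg_p; rewrite big_set1 eqxx.
by have := old_sigma_gt0 deg_p; lia.
Qed.

(* The sum at v depends on all colours of the star, so the last two are chosen
   jointly by exists_color_pair. *)
Section LastPair.
Variables (p q : T) (f : T -> nat) (x y : nat).
Let R := N :\ p :\ q.
Let Q := \sum_(u in R) f u.
Hypotheses (pN : p \in N) (qN : q \in N) (qp : q != p).
Hypothesis f_adm : admissible (ceil_div #|N| 2 - 1) R f.
Hypotheses (x_range : 0 < x <= k) (x_unsat : old_mult p x < ceil_div (old_deg p).+1 2).
Hypotheses (y_range : 0 < y <= k) (y_unsat : old_mult q y < ceil_div (old_deg q).+1 2).
Hypothesis x_nbr : forall w, G' p w -> w != q -> old_sigma p + x <> partial_sigma R f w.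
Hypothesis y_nbr : forall w, G' q w -> w != p -> old_sigma q + y <> partial_sigma R f w.
Hypothesis xy : x != y.
Hypothesis pq_sigma : G' p q -> old_sigma p + x <> old_sigma q + y.
Hypotheses (sum_p : y + Q <> old_sigma p) (sum_q : x + Q <> old_sigma q).
Hypothesis sum_R : forall u, u \in R -> x + y + Q <> old_sigma u + f u.

Lemma last_pair_admissible_star :
  admissible_star (fun z => if z == p then x else if z == q then y else f z).
Proof.
have pR : p \notin R by rewrite !inE eqxx andbF.
have qR : q \notin R by rewrite !inE eqxx.
have pqR : p \notin q |: R by rewrite !inE eq_sym (negbTE qp) eqxx andbF.
have qNp : q \in N :\ p by rewrite in_setD1 qp.
have N_eq : p |: (q |: R) = N by rewrite setD1K // setD1K.
have ceil_gt0 : 0 < ceil_div #|N| 2.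
  by rewrite /ceil_div (cardsD1 p) pN (cardsD1 q) qNp /= divn_gt0 // addnS addSn.
have [_ _ f_class _] := f_adm.
have adm_q : admissible (ceil_div #|N| 2) (q |: R) (fun z => if z == q then y else f z).
  apply: admissible_add f_adm qR (leq_subr 1 _) y_range y_unsat _ _.
    by rewrite (leq_ltn_trans (f_class y)) // ltn_subrL ceil_gt0.
  move=> w qw wNR; apply: y_nbr => //.
  by apply: contraTneq wNR => ->; rewrite pN (negbTE pR).
have adm : admissible (ceil_div #|N| 2) (p |: (q |: R))
    (fun z => if z == p then x else if z == q then y else f z).
  apply: admissible_add adm_q pqR (leqnn _) x_range x_unsat _ _.
    by rewrite card_class_add // eq_sym (negbTE xy) (leq_ltn_trans (f_class x)) // ltn_subrL ceil_gt0.
  move=> w pw _; rewrite partial_sigma_add.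
  by case: ifP => [/eqP wq | /negbT wq]; [apply: pq_sigma; rewrite -wq | apply: x_nbr].
split=> [|u uN _]; first by move: adm; rewrite N_eq.
have -> : \sum_(w in N) (if w == p then x else if w == q then y else f w) = x + (y + Q).
  rewrite (big_setD1 p pN) (big_setD1 q qNp) eqxx (negbTE qp) eqxx.
  congr (_ + (_ + _)); apply: eq_bigr => z; rewrite !in_setD1 => /and3P[zq zp _].
  by rewrite (negbTE zp) (negbTE zq).
case: (u =P p) => [-> | /eqP up]; first lia.
case: (u =P q) => [-> | /eqP uq]; first lia.
by rewrite addnA; apply: sum_R; rewrite !in_setD1 up uq.
Qed.

End LastPair.

Lemma card_nbrs_but u w : #|[set z | G' u z && (z != w)]| + G' u w = old_deg u.
Proof.
rewrite /old_deg /deg [RHS](cardsD1 w) inE addnC; congr (_ + _).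
by apply: eq_card => z; rewrite !inE andbC.
Qed.

Lemma admissible_star_ge2 : 2 <= #|N| -> exists f, admissible_star f.
Proof.
case/card_gt1P => p [q [pN qN]]; rewrite eq_sym => qp.
set R := N :\ p :\ q.
have cardN : #|N| = #|R|.+2 by rewrite (cardsD1 p) pN (cardsD1 q (N :\ p)) in_setD1 qp qN.
have [||f f_adm] := greedy_admissible (P := R); first exact: subset_trans (subsetDl _ _) (subsetDl _ _).
  by rewrite cardN addn2.
set Q := \sum_(u in R) f u.
set adj := G' p q.
have [ap ap_only] := unsaturated_colors p; have [aq aq_only] := unsaturated_colors q.
pose Fx : seq nat := [:: ap, old_sigma q - Q &
  [seq partial_sigma R f w - old_sigma p | w <- enum [set w | G' p w && (w != q)]]].
pose Fy : seq nat := [:: aq, old_sigma p - Q &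
  [seq partial_sigma R f w - old_sigma q | w <- enum [set w | G' q w && (w != p)]]].
pose Sums : seq nat := [seq old_sigma u + f u - Q | u <- enum R].
pose Diffs := (0, 0) :: (if adj then [:: (old_sigma p, old_sigma q)] else [::]).
have size_Fx : size Fx + adj = (old_deg p).+2.
  by rewrite /= size_map -cardE addSn addSn card_nbrs_but.
have size_Fy : size Fy + adj = (old_deg q).+2.
  by rewrite /= size_map -cardE addSn addSn /adj induced_sym card_nbrs_but.
have size_Sums : size Sums = #|R| by rewrite size_map -cardE.
have size_Diffs : size Diffs = adj + 1 by rewrite /Diffs; case: (adj).
have := old_deg_lt pN; have := old_deg_lt qN; have := card_N_le => dN dq dp.
have [|||x [y [xFx yFy xyS xyD]]] := @exists_color_pair k Fx Fy Sums Diffs; try lia.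
move: xFx yFy; rewrite !mem_free_colors !inE !negb_or.
move=> /andP[x_range /and3P[xa xQ xF]] /andP[y_range /and3P[ya yQ yF]].
move: xyD => /= /andP[]; rewrite !addn0 => xy adj_xy.
exists (fun z => if z == p then x else if z == q then y else f z).
apply: last_pair_admissible_star => //.
- exact: ap_only.
- exact: aq_only.
- by move=> w pw wq; apply: map_subn_notin xF _; rewrite mem_enum !inE pw.
- by move=> w qw wp; apply: map_subn_notin yF _; rewrite mem_enum !inE qw.
- move=> G'pq; move: adj_xy; rewrite /adj G'pq /= andbT => /eqP; lia.
- by move=> yQ'; move: yQ; rewrite -yQ' addnK eqxx.
- by move=> xQ'; move: xQ; rewrite -xQ' addnK eqxx.
- move=> u uR xyQ; move/negP: xyS; apply; apply/mapP; exists u; first by rewrite mem_enum.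
  by rewrite -xyQ addnK.
Qed.

Lemma exists_admissible_star : exists f, admissible_star f.
Proof.
have [|N_lt2] := leqP 2 #|N|; first exact: admissible_star_ge2.
move: admissible_star0 admissible_star1; case: #|N| N_lt2 => [|[|]] // _ star0 star1.
- exact: star0.
- exact: star1.
Qed.

End AddVertex.
End InducedSubgraphs.

Lemma weak_qm_nsd_induced (T : finType) (e : rel T) k :
  symmetric e -> irreflexive e -> 3 * max_deg e + 4 <= 2 * k ->
  forall S, exists c, weak_qm_nsd (induced e S) k c.
Proof.
move=> e_sym e_irr k_large S; elim: {S}#|S| {-2}S (erefl #|S|) => [|n IH] S cardS.
  by exists (fun _ _ => 1); rewrite (cards0_eq cardS); exact: weak_qm_nsd_induced0.
have [v vS] : exists v, v \in S by apply/card_gt0P; rewrite cardS.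
have [c c_weak] : exists c, weak_qm_nsd (induced e (S :\ v)) k c.
  by apply: IH; move: cardS; rewrite (cardsD1 v) vS => -[].
have [f f_star] := exists_admissible_star e_sym e_irr c_weak k_large.
by exists (join_coloring v c f); exact: join_weak_qm_nsd.
Qed.

Lemma deg1_nbr (T : finType) (e : rel T) a b z : deg e a = 1 -> e a b -> e a z -> z = b.
Proof.
move/eqP/cards1P => [t Nt] ab az.
have : b \in [set y | e a y] by rewrite inE.
have : z \in [set y | e a y] by rewrite inE.
by rewrite Nt !inE => /eqP -> /eqP ->.
Qed.

Lemma K2_component (T : finType) (e : rel T) u w : simple_graph e -> e u w ->
  deg e u = 1 -> deg e w = 1 -> #|[set y | connect e u y]| = 2.
Proof.
move=> [e_sym e_irr] uw du dw.
have closed x z : x \in [set u; w] -> e x z -> z \in [set u; w].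
  rewrite !inE => /orP[] /eqP -> xz; first by rewrite (deg1_nbr du uw xz) eqxx orbT.
  by rewrite (deg1_nbr dw (_ : e w u) xz) ?eqxx // e_sym.
have -> : [set y | connect e u y] = [set u; w].
  apply/setP => y; rewrite inE; apply/idP/idP; last first.
    by rewrite !inE => /orP[] /eqP ->; [exact: connect0 | exact: connect1].
  have path_closed s x : x \in [set u; w] -> path e x s -> last x s \in [set u; w].
    elim: s x => //= z s IH x xuw /andP[xz zs]; exact: IH (closed x z xuw xz) zs.
  by case/connectP => s us ->; apply: path_closed us; rewrite setU11.
by rewrite cards2; case: eqP => // uw'; rewrite uw' e_irr in uw.
Qed.

Lemma nice_nsd (T : finType) (e : rel T) c : simple_graph e -> nice e -> weak_nsd e c -> nsd e c.
Proof.
move=> e_simple e_nice weak u w uw; apply: weak => //.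
have [e_sym _] := e_simple.
have deg_gt0 a b : e a b -> 0 < deg e a by move=> ab; apply/card_gt0P; exists b; rewrite inE.
case: (leqP (deg e u) 1) => du //=; case: (leqP (deg e w) 1) => dw //=.
have du1 : deg e u = 1 by have := deg_gt0 _ _ uw; lia.
have dw1 : deg e w = 1 by have := deg_gt0 w u (_ : e w u); rewrite e_sym; lia.
by have := e_nice u; rewrite (K2_component e_simple uw du1 dw1).
Qed.

Theorem mainTheorem7 (T : finType) (e : rel T) :
  simple_graph e -> nice e ->
  qm_nsd_colorable e (ceil_div (3 * max_deg e + 4) 2).
Proof.
move=> e_simple e_nice; have [e_sym e_irr] := e_simple.
set k := ceil_div (3 * max_deg e + 4) 2.
have k_large : 3 * max_deg e + 4 <= 2 * k by rewrite /k /ceil_div; lia.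
have [c hc] := weak_qm_nsd_induced e_sym e_irr k_large setT.
have [col qm weak] := weak_qm_nsd_eq2 (induced_setT e) hc.
by exists c; split => //; exact: nice_nsd.
Qed.
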